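(* Let $h$ be a left-invariant metric with matrix $\Phi$ with respect to $h_0$, let $\lambda>0$, and let $\Theta=\lambda^{-1}\Phi$ be the matrix of $h$ with respect to the bi-invariant metric $\lambda h_0$. Put $\Psi=I-\Phi^{-1}$ and $\Upsilon=I-\Theta^{-1}$. Fix $X,Y\in\mathfrak g$ and let $\kappa^\Psi$ be the curvature function of the path $\Phi_t=(I-t\Psi)^{-1}$ (relative to $h_0$) and $\kappa^\Upsilon$ that of the path $\Theta_t=(I-t\Upsilon)^{-1}$ (relative to $\lambda h_0$). Then for all $0\le t\le1$, $$\kappa^\Upsilon(t)=\lambda\,(1-(1-\lambda)t)^3\,\kappa^\Psi\!\left(\frac{\lambda t}{1-(1-\lambda)t}\right).$$
   Context: $G$ is a compact Lie group with Lie algebra $\mathfrak g$ and bi-invariant metric $h_0$. For a bi-invariant metric $b$ and left-invariant metric $h$, the matrix of $h$ with respect to $b$ is the $b$-self-adjoint positive definite $\Phi$ with $h(X,Y)=b(\Phi X,Y)$ on $\mathfrak g$. For a $b$-self-adjoint $\Psi$, the inverse-linear path $\Phi_t=(I-t\Psi)^{-1}$ (relative to $b$) determines left-invariant metrics $h_t(X,Y)=b(\Phi_tX,Y)$. The unnormalized sectional curvature is $k_h(Z_1,Z_2)=h(R_h(Z_1,Z_2)Z_2,Z_1)$, and for fixed $X,Y$ the curvature function is $\kappa^\Psi(t)=k_{h_t}(\Phi_t^{-1}X,\Phi_t^{-1}Y)$. *)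

(* The Lie algebra g of G is modelled as the column vectors
   'cV[R]_n (coordinates in a fixed basis), with a Lie bracket [br]. *)
From HB Require Import structures.
From mathcomp Require Import all_boot all_order all_algebra.
Set Implicit Arguments. Unset Strict Implicit. Unset Printing Implicit Defensive.
Import Order.TTheory GRing.Theory Num.Theory.
Local Open Scope ring_scope.

Section Defs.
Variables (R : realFieldType) (n : nat).
Notation vec := 'cV[R]_n.

Definition form (H : 'M[R]_n) (X Y : vec) : R := (X^T *m H *m Y) 0 0.

Definition evec (j : 'I_n) : vec := delta_mx j 0.

Definition is_lie_bracket (br : vec -> vec -> vec) : Prop :=
  [/\ forall (a : R) X Y Z, br (a *: X + Y) Z = a *: br X Z + br Y Z,
      forall X Y, br X Y = - br Y X &
      forall X Y Z, br X (br Y Z) + br Y (br Z X) + br Z (br X Y) = 0].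

Definition bi_invariant (br : vec -> vec -> vec) (B : 'M[R]_n) : Prop :=
  [/\ B^T = B,
      forall X : vec, X != 0 -> 0 < form B X X &
      forall X Y Z, form B (br X Y) Z = form B X (br Y Z)].

Definition metric_matrix (B Phi : 'M[R]_n) : Prop :=
  Phi^T *m B = B *m Phi /\ forall X : vec, X != 0 -> 0 < form B (Phi *m X) X.

(* Gram matrix of h(X,Y) = b(Phi X, Y) *)
Definition gram_of (B Phi : 'M[R]_n) : 'M[R]_n := Phi^T *m B.

Variable br : vec -> vec -> vec.

(* Levi-Civita connection of the left-invariant metric with Gram matrix H,
   on left-invariant vector fields, given by the Koszul formula
   2 h(nabla_X Y, Z) = h([X,Y],Z) - h([Y,Z],X) + h([Z,X],Y). *)
Definition nabla (H : 'M[R]_n) (X Y : vec) : vec :=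
  invmx (H^T) *m \col_j (2^-1 * (form H (br X Y) (evec j)
                                - form H (br Y (evec j)) X
                                + form H (br (evec j) X) Y)).

Definition riem (H : 'M[R]_n) (X Y Z : vec) : vec :=
  nabla H X (nabla H Y Z) - nabla H Y (nabla H X Z) - nabla H (br X Y) Z.

(* unnormalized sectional curvature k_h(Z1,Z2) = h(R(Z1,Z2)Z2, Z1) *)
Definition ksec (H : 'M[R]_n) (Z1 Z2 : vec) : R := form H (riem H Z1 Z2 Z2) Z1.

Definition kappa (B Psi : 'M[R]_n) (X Y : vec) (t : R) : R :=
  let Phit := invmx (1%:M - t *: Psi) in
  ksec (gram_of B Phit) (invmx Phit *m X) (invmx Phit *m Y).

End Defs.

(* Since [Ups = 1 - lam Phi^-1], the two inverse-linear paths are related by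
   [1 - t Ups = c (1 - s Psi)] with [c = 1 - (1 - lam) t] and [s = lam t / c].
   Hence [Theta_t = c^-1 Phi_s] and [Theta_t^-1 X = c Phi_s^-1 X], while the
   Gram matrix of [h_t] is [lam / c] times that of the metric of [Phi_s].
   The Levi-Civita connection is unchanged by a constant rescaling of the
   metric and is bilinear, so the unnormalised sectional curvature scales as
   [k_{aH}(cX, cY) = a c^4 k_H(X, Y)], giving the factor [lam c^3]. *)

From Pilot Require Import Defs.
From HB Require Import structures.
From mathcomp Require Import all_boot all_order all_algebra.
From mathcomp Require Import ring lra.
Import Order.TTheory GRing.Theory Num.Theory.
Local Open Scope ring_scope.

Section Matrices.
Variables (R : realFieldType) (n : nat).
Implicit Types (A B H Phi : 'M[R]_n) (X Y Z : 'cV[R]_n) (a lam s t : R).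

Lemma formZl H a X Y : Defs.form H (a *: X) Y = a * Defs.form H X Y.
Proof. by rewrite /Defs.form linearZ /= -!scalemxAl mxE. Qed.

Lemma formZr H a X Y : Defs.form H X (a *: Y) = a * Defs.form H X Y.
Proof. by rewrite /Defs.form -scalemxAr mxE. Qed.

Lemma formZ a H X Y : Defs.form (a *: H) X Y = a * Defs.form H X Y.
Proof. by rewrite /Defs.form -scalemxAr -scalemxAl mxE. Qed.

Lemma formDl H X Y Z :
  Defs.form H (X + Y) Z = Defs.form H X Z + Defs.form H Y Z.
Proof. by rewrite /Defs.form linearD /= !mulmxDl mxE. Qed.

Lemma form0l H Z : Defs.form H 0 Z = 0.
Proof. by rewrite /Defs.form trmx0 !mul0mx mxE. Qed.

Lemma unitmx_ker0 A : (forall X, A *m X = 0 -> X = 0) -> A \in unitmx.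
Proof.
move=> ker0; rewrite -unitmx_tr unitmxE unitfE; apply/negP => /det0P [v vn0 vA].
have Av : A *m v^T = 0 by rewrite -[A]trmxK -trmx_mul vA trmx0.
by move/eqP: vn0; apply; rewrite -[v]trmxK (ker0 _ Av) trmx0.
Qed.

Lemma posdef_unitmx A : (forall X, X != 0 -> 0 < Defs.form A X X) ->
  A \in unitmx.
Proof.
move=> Apos; apply: unitmx_ker0 => X AX0; apply/eqP/negPn/negP => /Apos.
by rewrite /Defs.form -mulmxA AX0 mulmx0 mxE ltxx.
Qed.

Lemma form_posdef_unitmx B A :
  (forall X, X != 0 -> 0 < Defs.form B (A *m X) X) -> A \in unitmx.
Proof.
move=> Apos; apply: unitmx_ker0 => X AX0; apply/eqP/negPn/negP => /Apos.
by rewrite AX0 form0l ltxx.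
Qed.

(* [(1 - s Psi) Phi = (1 - s) Phi + s] is a convex combination of two
   [B]-positive operators. *)
Lemma inverse_linear_path_unitmx B Phi s :
  (forall X, X != 0 -> 0 < Defs.form B X X) ->
  (forall X, X != 0 -> 0 < Defs.form B (Phi *m X) X) ->
  0 <= s <= 1 -> 1%:M - s *: (1%:M - invmx Phi) \in unitmx.
Proof.
move=> Bpos Phipos /andP [s0 s1].
have Phiu : Phi \in unitmx by exact: form_posdef_unitmx Phipos.
pose N := (1 - s) *: Phi + s *: (1%:M : 'M[R]_n).
have NE : N = (1%:M - s *: (1%:M - invmx Phi)) *m Phi.
  rewrite mulmxBl mul1mx -scalemxAl mulmxBl mul1mx mulVmx //.
  by apply/matrixP => i j; rewrite !mxE; ring.
have : N \in unitmx.
  apply: (@form_posdef_unitmx B) => X Xn0.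
  rewrite /N mulmxDl -!scalemxAl mul1mx formDl !formZl.
  have PhiX := Phipos X Xn0; have BX := Bpos X Xn0.
  have [->|sn0] := eqVneq s 0; first by rewrite subr0 mul1r mul0r addr0.
  have sp : 0 < s by rewrite lt_def sn0 s0.
  have : 0 <= (1 - s) * Defs.form B (Phi *m X) X.
    by rewrite mulr_ge0 ?subr_ge0 // ltW.
  have : 0 < s * Defs.form B X X by rewrite mulr_gt0.
  lra.
by rewrite NE unitmx_mul => /andP [].
Qed.

Lemma inverse_linear_path_rescale Phi lam t : Phi \in unitmx -> lam != 0 ->
  let c := 1 - (1 - lam) * t in c != 0 ->
  1%:M - t *: (1%:M - invmx (lam^-1 *: Phi))
  = c *: (1%:M - (lam * t / c) *: (1%:M - invmx Phi)).
Proof.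
move=> Phiu lamn0 c cn0.
rewrite invmxZ ?invrK ?unitmxZ ?unitfE ?invr_eq0 //.
by apply/matrixP => i j; rewrite !mxE /c in cn0 *; field.
Qed.

End Matrices.

Section Curvature.
Variables (R : realFieldType) (n : nat).
Variable br : 'cV[R]_n -> 'cV[R]_n -> 'cV[R]_n.
Hypothesis br_lie : is_lie_bracket br.
Implicit Types (B H : 'M[R]_n) (X Y Z : 'cV[R]_n) (a c : R).

Lemma brZl a X Y : br (a *: X) Y = a *: br X Y.
Proof.
case: br_lie => lin _ _.
have br0 : br 0 Y = 0.
  have := lin 1 0 0 Y; rewrite scaler0 addr0 scale1r => h.
  by apply: (addrI (br 0 Y)); rewrite addr0 -h.
by have := lin a X 0 Y; rewrite addr0 br0 addr0.
Qed.

Lemma brZr a X Y : br X (a *: Y) = a *: br X Y.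
Proof. by case: br_lie => _ anti _; rewrite (anti X) brZl (anti X Y) scalerN. Qed.

Lemma nablaZl H a X Y : nabla br H (a *: X) Y = a *: nabla br H X Y.
Proof.
rewrite /nabla scalemxAr; congr (_ *m _); apply/matrixP => i j; rewrite !mxE.
rewrite !(brZl, brZr, formZl, formZr); ring.
Qed.

Lemma nablaZr H a X Y : nabla br H X (a *: Y) = a *: nabla br H X Y.
Proof.
rewrite /nabla scalemxAr; congr (_ *m _); apply/matrixP => i j; rewrite !mxE.
rewrite !(brZl, brZr, formZl, formZr); ring.
Qed.

Lemma nablaZ a H X Y : a != 0 -> H^T \in unitmx ->
  nabla br (a *: H) X Y = nabla br H X Y.
Proof.
move=> an0 Hu; rewrite /nabla linearZ /= invmxZ ?unitmxZ ?unitfE //.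
rewrite -scalemxAl scalemxAr; congr (_ *m _); apply/matrixP => i j.
by rewrite !mxE !formZ; field.
Qed.

Lemma riemZ H c X Y Z :
  riem br H (c *: X) (c *: Y) (c *: Z) = c ^+ 3 *: riem br H X Y Z.
Proof.
rewrite /riem !(nablaZl, nablaZr, brZl, brZr) !scalerBr.
by congr (_ - _ - _); rewrite !scalerA; congr (_ *: _); ring.
Qed.

Lemma ksecZ a H c X Y : a != 0 -> H^T \in unitmx ->
  ksec br (a *: H) (c *: X) (c *: Y) = a * c ^+ 4 * ksec br H X Y.
Proof.
move=> an0 Hu; rewrite /ksec /riem !nablaZ // -/(riem br H _ _ _) riemZ.
by rewrite formZ formZl formZr; ring.
Qed.

Lemma kappa_rescale a B Psi Ups c s t X Y :
  a != 0 -> c != 0 -> B \in unitmx -> 1%:M - s *: Psi \in unitmx ->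
  1%:M - t *: Ups = c *: (1%:M - s *: Psi) ->
  kappa br (a *: B) Ups X Y t = a * c ^+ 3 * kappa br B Psi X Y s.
Proof.
move=> an0 cn0 Bu Mu UpsE; rewrite /kappa /= UpsE !invmxK -!scalemxAl.
rewrite invmxZ ?unitmxZ ?unitfE // /gram_of [(_ *: _)^T]linearZ /=.
rewrite -scalemxAr -scalemxAl scalerA ksecZ ?mulf_neq0 ?invr_eq0 //; last first.
  by rewrite trmx_mul trmxK unitmx_mul unitmx_tr unitmx_inv Mu Bu.
by congr (_ * _); field.
Qed.

End Curvature.

Theorem mainTheorem13 (R : realFieldType) (n : nat)
  (br : 'cV[R]_n -> 'cV[R]_n -> 'cV[R]_n) (B0 Phi : 'M[R]_n) (lam : R)
  (X Y : 'cV[R]_n) :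
  is_lie_bracket br -> bi_invariant br B0 -> metric_matrix B0 Phi -> 0 < lam ->
  let Theta := lam^-1 *: Phi in
  let Psi := 1%:M - invmx Phi in
  let Ups := 1%:M - invmx Theta in
  forall t : R, 0 <= t <= 1 ->
    kappa br (lam *: B0) Ups X Y t
    = lam * (1 - (1 - lam) * t) ^+ 3
        * kappa br B0 Psi X Y (lam * t / (1 - (1 - lam) * t)).
Proof.
move=> br_lie [_ B0pos _] [_ Phipos] lam0 Theta Psi Ups t /andP [t0 t1].
have c0 : 0 < 1 - (1 - lam) * t by nra.
have s01 : 0 <= lam * t / (1 - (1 - lam) * t) <= 1.
  by rewrite divr_ge0 ?mulr_ge0 ?(ltW lam0) ?(ltW c0) //= ler_pdivrMr // mul1r; nra.
have Phiu : Phi \in unitmx by exact: form_posdef_unitmx Phipos.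
apply: kappa_rescale => //; rewrite ?gt_eqF //.
- exact: posdef_unitmx B0pos.
- exact: inverse_linear_path_unitmx B0pos Phipos s01.
- by apply: inverse_linear_path_rescale; rewrite ?gt_eqF.
Qed.
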